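(* There exists a planar graph $G$ with $HG(G)=12$. Specifically, let $m=66^{144}$ and let $G$ be the graph with vertex set $\{u,v\}\cup\{x_i,y_i: 1\le i\le m\}$ whose edges are $uv$, the $m$ edges $x_iy_i$ ($1\le i\le m$), and all edges $ux_i,uy_i,vx_i,vy_i$ ($1\le i\le m$). Then $G$ is planar and $HG(G)=12$.
   Context: The hat guessing game on a finite simple graph $G$ with $q$ colors: each vertex (player) is assigned a hat whose color is an arbitrary element of a fixed set $Q$ of $q$ colors. Each player sees the hat colors of exactly its neighbors in $G$ (not its own). Before the colors are assigned, the players fix a deterministic guessing strategy: for each vertex $w$, a function from the colorings of the neighbors of $w$ to $Q$, which is $w$'s guess for its own color. No communication is allowed. The strategy is winning if for every assignment of colors from $Q$ to all vertices, at least one vertex guesses its own color correctly. The hat guessing number $HG(G)$ is the largest integer $q$ for which a winning strategy with $q$ colors exists. *)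

From Stdlib Require Import Reals.
From mathcomp Require Import all_boot.

Set Implicit Arguments.
Unset Strict Implicit.
Unset Printing Implicit Defensive.

(* A simple graph is an irreflexive symmetric relation e on a finType T. *)

Definition hat_local (T : finType) (e : rel T) (q : nat)
  (f : T -> (T -> 'I_q) -> 'I_q) : Prop :=
  forall (w : T) (c c' : T -> 'I_q),
    (forall x, e w x -> c x = c' x) -> f w c = f w c'.

Definition hat_winning (T : finType) (q : nat)
  (f : T -> (T -> 'I_q) -> 'I_q) : Prop :=
  forall c : T -> 'I_q, exists w : T, f w c = c w.

Definition hat_win (T : finType) (e : rel T) (q : nat) : Prop :=
  exists f : T -> (T -> 'I_q) -> 'I_q, hat_local e f /\ hat_winning f.

Definition HG_is (T : finType) (e : rel T) (k : nat) : Prop :=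
  hat_win e k /\ (forall q, hat_win e q -> q <= k).

Open Scope R_scope.

Definition in01 (t : R) : Prop := 0 <= t <= 1.

Definition arc_continuous (g : R -> R * R) : Prop :=
  forall t, in01 t -> forall eps, 0 < eps -> exists delta, 0 < delta /\
    forall s, in01 s -> Rabs (s - t) < delta ->
      Rabs (fst (g s) - fst (g t)) < eps /\ Rabs (snd (g s) - snd (g t)) < eps.

Definition arc_injective (g : R -> R * R) : Prop :=
  forall s t, in01 s -> in01 t -> g s = g t -> s = t.

Definition planar (T : finType) (e : rel T) : Prop :=
  exists (p : T -> R * R) (g : T -> T -> R -> R * R),
    injective p /\
    (forall x y, e x y ->
       arc_continuous (g x y) /\ arc_injective (g x y) /\
       g x y 0 = p x /\ g x y 1 = p y /\
       (forall t, in01 t -> g y x t = g x y (1 - t))) /\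
    (forall x y z s, e x y -> 0 < s < 1 -> g x y s <> p z) /\
    (forall x y x' y' s t, e x y -> e x' y' ->
       ~ ((x = x' /\ y = y') \/ (x = y' /\ y = x')) ->
       0 < s < 1 -> in01 t -> g x y s <> g x' y' t).

Close Scope R_scope.

(* Vertices: None = u, Some None = v, Some (Some (i,false)) = x_i,
   Some (Some (i,true)) = y_i, for i : 'I_m (indices 1..m shifted to 0..m-1). *)
Definition hvert (m : nat) : finType := option (option ('I_m * bool)).

Definition hedge (m : nat) : rel (hvert m) := fun a b =>
  match a, b with
  | None, Some _ => true
  | Some _, None => true
  | Some None, Some (Some _) => true
  | Some (Some _), Some None => true
  | Some (Some (i, b1)), Some (Some (j, b2)) => (i == j) && (b1 != b2)
  | _, _ => false
  end.
Arguments hedge : clear implicits.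

From Stdlib Require Import Reals Lra.
From mathcomp Require Import all_boot zify.

Set Implicit Arguments.
Unset Strict Implicit.
Unset Printing Implicit Defensive.

(* Each pair (x_i, y_i) sees the colours (a, b) of (u, v) and
   uses an offset t = phi_i(a, b) < 6: x_i guesses c(y_i) + 2t and y_i guesses
   c(x_i) + 2t + 1 (mod 12); for every colouring of the pair one of the six
   offsets is correct.  As the tables phi_i run over all 6^144 functions, at
   most five pairs (a, b) leave every x_i, y_i wrong; u and v see all pairs,
   know these five pairs, and any five pairs can be "covered" by a guess of u
   from b and a guess of v from a (a small combinatorial lemma).

   With q >= 13 colours restrict u to two and v to three
   colours; a counting argument colours every pair so that it always guesses
   wrong, and then u and v can be fooled by pigeonhole. *)

Section Covering.
Variable T : finType.
Implicit Types (S : {set T * T}) (F G : T -> T).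

Definition covers S F G : bool :=
  [forall p in S, (p.1 == F p.2) || (p.2 == G p.1)].

Lemma covers_grid S a1 a2 b1 b2 :
  (forall p, p \in S -> ((p.1 == a1) || (p.1 == a2)) && ((p.2 == b1) || (p.2 == b2))) ->
  covers S (fun b => if b == b1 then a1 else a2) (fun a => if a == a1 then b2 else b1).
Proof.
move=> grid; apply/forall_inP => -[a b] /grid /andP [/= ha hb].
case/orP: ha => /eqP ->; case/orP: hb => /eqP ->; rewrite ?eqxx ?orbT //=.
all: by case: (eqVneq a2 a1) => [e|_]; case: (eqVneq b2 b1) => [e'|_];
  rewrite ?e ?e' ?eqxx ?orbT.
Qed.

Definition lonely (Y : finType) (pr : T * T -> Y) S p : bool :=
  [forall q in S, (pr q == pr p) ==> (q == p)].

Lemma covers_add_snd S F G p :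
  p \in S -> lonely snd S p ->
  covers (S :\ p) F G -> covers S (fun b => if b == p.2 then p.1 else F b) G.
Proof.
move=> pS /forall_inP lon /forall_inP cov; apply/forall_inP => q qS.
case: (eqVneq q.2 p.2) => [e|ne].
  by move: (lon q qS); rewrite e eqxx => /eqP ->; rewrite !eqxx.
by apply: cov; rewrite !inE qS andbT; apply: contraNneq ne => ->.
Qed.

Lemma covers_add_fst S F G p :
  p \in S -> lonely fst S p ->
  covers (S :\ p) F G -> covers S F (fun a => if a == p.1 then p.2 else G a).
Proof.
move=> pS /forall_inP lon /forall_inP cov; apply/forall_inP => q qS.
case: (eqVneq q.1 p.1) => [e|ne].
  by move: (lon q qS); rewrite e eqxx => /eqP ->; rewrite !eqxx orbT.
by apply: cov; rewrite !inE qS andbT; apply: contraNneq ne => ->.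
Qed.

(* If no element of [S] is lonely for [pr], every fibre has at least two
   elements, so [pr] takes at most #|S|/2 values on [S]. *)
Lemma card_image_no_lonely (Y : finType) S (pr : T * T -> Y) :
  (forall p, p \in S -> ~~ lonely pr S p) -> 2 * #|pr @: S| <= #|S|.
Proof.
move=> crowded; rewrite -[#|S|]sum1_card (partition_big_imset pr) /=.
rewrite mulnC -sum_nat_const; apply: leq_sum => _ /imsetP [p pS ->].
rewrite sum1dep_card; apply/card_gt1P.
have /forall_inPn [q qS] := crowded p pS; rewrite negb_imply => /andP [eq_pr nqp].
by exists p, q; rewrite !inE pS qS eq_pr eqxx eq_sym.
Qed.

Lemma card_le2_pair (Y : finType) (A : {set Y}) (y0 : Y) :
  #|A| <= 2 -> exists a1 a2, forall y, y \in A -> (y == a1) || (y == a2).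
Proof.
move=> small; exists (nth y0 (enum A) 0), (nth y0 (enum A) 1) => y yA.
have ys : y \in enum A by rewrite mem_enum.
have := nth_index y0 ys; have := index_mem y (enum A).
rewrite ys -cardE => /leq_trans/(_ small).
by case: (index y _) => [|[|]] // _ <-; rewrite eqxx ?orbT.
Qed.

(* Pairs whose first or
   second coordinate is lonely are peeled off by induction; if there is
   none, both coordinates take at most two values (each taken twice) and
   [S] lies in a two-by-two grid. *)
Lemma covers_small S : #|S| <= 5 -> exists F G, covers S F G.
Proof.
have [n] := ubnP #|S|; elim: n S => // n IH S ltS small.
have rec p : p \in S -> exists F G, covers (S :\ p) F G.
  move=> pS; apply: IH; last by rewrite (leq_trans _ small) // subset_leq_card ?subsetDl.
  by move: ltS; rewrite (cardsD1 p S) pS.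
case: (boolP [exists p in S, lonely snd S p]) => [/exists_inP [p pS lon]|].
  by have [F [G cov]] := rec p pS; eexists; eexists; apply: covers_add_snd cov.
move/exists_inPn => crowded_snd.
case: (boolP [exists p in S, lonely fst S p]) => [/exists_inP [p pS lon]|].
  by have [F [G cov]] := rec p pS; eexists; eexists; apply: covers_add_fst cov.
move/exists_inPn => crowded_fst.
have [->|[p0 p0S]] := set_0Vmem S.
  by exists id, id; apply/forall_inP => p; rewrite inE.
have few_values (pr : T * T -> T) :
    (forall p, p \in S -> ~~ lonely pr S p) -> #|pr @: S| <= 2.
  by move=> /card_image_no_lonely /leq_trans/(_ small); lia.
have [a1 [a2 Ha]] := card_le2_pair p0.1 (few_values fst crowded_fst).
have [b1 [b2 Hb]] := card_le2_pair p0.2 (few_values snd crowded_snd).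
eexists; eexists; apply: covers_grid => p pS.
by apply/andP; split; [apply: Ha | apply: Hb]; apply/imsetP; exists p.
Qed.

Definition cover_of S : {ffun T -> T} * {ffun T -> T} :=
  odflt ([ffun x => x], [ffun x => x])
    [pick FG : {ffun T -> T} * {ffun T -> T} | covers S FG.1 FG.2].

Lemma cover_ofP S : #|S| <= 5 -> covers S (cover_of S).1 (cover_of S).2.
Proof.
move=> /covers_small [F [G /forall_inP cov]]; rewrite /cover_of.
case: pickP => [FG //|/(_ ([ffun x => F x], [ffun x => G x]))] /=.
by move/negbT/forall_inPn => [p /cov]; rewrite !ffunE => ->.
Qed.
End Covering.

Definition xv m (i : 'I_m) : hvert m := Some (Some (i, false)).
Definition yv m (i : 'I_m) : hvert m := Some (Some (i, true)).

Definition mod12 (k : nat) : 'I_12 := inord (k %% 12).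

(* Each residue of x - y mod 12 is either 2t or -(2t+1) for some t < 6:
   the six offsets t together catch every colouring of a pair. *)
Lemma offsets_catch (x y : 'I_12) : exists t : 'I_6,
  (x == mod12 (y + 2 * t)) || (y == mod12 (x + 2 * t + 1)).
Proof.
have table : all (fun x => all (fun y => has (fun t =>
   (x == (y + 2 * t) %% 12) || (y == (x + 2 * t + 1) %% 12)) (iota 0 6))
   (iota 0 12)) (iota 0 12) by [].
move/allP: table => /(_ x); rewrite mem_iota ltn_ord => /(_ isT) /allP /(_ y).
rewrite mem_iota ltn_ord => /(_ isT) /hasP [t]; rewrite mem_iota => /= t_lt Ht.
exists (Ordinal t_lt); move: Ht; rewrite -!val_eqE /= /mod12 !inordK //.
all: by rewrite ltn_pmod.
Qed.

(* An offset table tells, for every colour pair (c u, c v), which of the six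
   offsets the pair (x_i, y_i) uses.  The i-th pair uses the i-th table. *)
Definition Offsets := {ffun 'I_12 * 'I_12 -> 'I_6}.

Definition offsets (i : nat) : Offsets := nth [ffun=> ord0] (enum {: Offsets}) i.

Lemma offsets_onto m (psi : Offsets) : 6 ^ 144 <= m -> exists i : 'I_m, offsets i = psi.
Proof.
move=> enough.
have lt_m : index psi (enum {: Offsets}) < m.
  have card_tables : #|{: Offsets}| = 6 ^ 144.
    by rewrite card_ffun card_prod !card_ord.
  by apply: leq_trans enough; rewrite -card_tables cardE index_mem mem_enum.
by exists (Ordinal lt_m); rewrite /offsets nth_index ?mem_enum.
Qed.

Section LowerBound.
Variable m : nat.
Hypothesis enough_pairs : 6 ^ 144 <= m.
Local Notation V := (hvert m).
Local Notation Q := 'I_12.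

Definition pair_wins (i : 'I_m) (p : Q * Q) (c : V -> Q) : bool :=
  (c (xv i) == mod12 (c (yv i) + 2 * offsets i p))
  || (c (yv i) == mod12 (c (xv i) + 2 * offsets i p + 1)).

(* The colour pairs (c u, c v) for which no pair x_i y_i guesses correctly;
   it only depends on the colours of the x_i and y_i. *)
Definition losing (c : V -> Q) : {set Q * Q} :=
  [set p | [forall i, ~~ pair_wins i p c]].

Definition strategy (w : V) (c : V -> Q) : Q :=
  match w with
  | None => (cover_of (losing c)).1 (c (Some None))
  | Some None => (cover_of (losing c)).2 (c None)
  | Some (Some (i, false)) => mod12 (c (yv i) + 2 * offsets i (c None, c (Some None)))
  | Some (Some (i, true)) => mod12 (c (xv i) + 2 * offsets i (c None, c (Some None)) + 1)
  end.

(* At most five colour pairs are losing: otherwise number six of them by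
   offsets 0..5; the pair using this table catches one of them. *)
Lemma losing_small c : #|losing c| <= 5.
Proof.
rewrite leqNgt; apply/negP => big.
pose s := enum (losing c).
have [i offs_i] := offsets_onto [ffun p => inord (index p s)] enough_pairs.
have [t catch] := offsets_catch (c (xv i)) (c (yv i)).
have t_lt : t < size s by rewrite -cardE (leq_trans (ltn_ord t)).
pose p := nth (ord0, ord0) s t.
have p_losing : p \in losing c by rewrite -mem_enum mem_nth.
have offs_p : offsets i p = t.
  by rewrite offs_i ffunE index_uniq ?enum_uniq // inord_val.
by move: p_losing; rewrite inE => /forallP /(_ i); rewrite /pair_wins offs_p catch.
Qed.

(* Every vertex only uses colours it sees; u and v see all x_i, y_i, which
   determine the losing set. *)
Lemma strategy_local : hat_local (hedge m) strategy.
Proof.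
move=> w c c' same.
have same_losing : (forall i, c (xv i) = c' (xv i) /\ c (yv i) = c' (yv i)) ->
    losing c = losing c'.
  move=> same_pairs; apply/setP => p; rewrite !inE; apply: eq_forallb => i.
  by rewrite /pair_wins !(proj1 (same_pairs i)) !(proj2 (same_pairs i)).
case: w same => [[[i [|]]|]|] same /=.
- rewrite (same None) // (same (Some None)) //.
  by rewrite (same (xv i)) //= eqxx.
- rewrite (same None) // (same (Some None)) //.
  by rewrite (same (yv i)) //= eqxx.
- by rewrite (same None) // same_losing // => i; rewrite !same.
- by rewrite (same (Some None)) // same_losing // => i; rewrite !same.
Qed.

(* Either some pair catches its colours at (c u, c v), or (c u, c v) is
   losing and then u or v guesses right by the covering property. *)
Lemma strategy_winning : hat_winning strategy.
Proof.
move=> c.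
case: (boolP [exists i, pair_wins i (c None, c (Some None)) c]).
  case/existsP => i /orP [] /eqP catch; first by exists (xv i); rewrite /= catch.
  by exists (yv i); rewrite /= catch.
rewrite negb_exists => /forallP no_pair.
have uv_losing : (c None, c (Some None)) \in losing c by rewrite inE; apply/forallP.
move/forall_inP: (cover_ofP (losing_small c)) => /(_ _ uv_losing) /orP [] /eqP /= e.
  by exists None; rewrite /= e.
by exists (Some None); rewrite /= e.
Qed.

Lemma lower_bound : hat_win (hedge m) 12.
Proof. by exists strategy; split; [exact: strategy_local | exact: strategy_winning]. Qed.

End LowerBound.

Lemma subset_of_card (T : finType) n : n <= #|T| -> exists A : {set T}, #|A| = n.
Proof.
case/card_geqP => s [/card_uniqP card_s size_s _].
by exists [set x in s]; rewrite cardsE card_s.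
Qed.

Lemma avoid_values (T I : finType) (A : {set T}) (P : {set I}) (f : I -> T) :
  #|P| < #|A| -> exists2 b, b \in A & forall a, a \in P -> b != f a.
Proof.
move=> small; have : ~~ (A \subset f @: P).
  by apply: contraTN small => /subset_leq_card le; rewrite -leqNgt (leq_trans le) ?leq_imset_card.
case/subsetPn => b bA b_out; exists b => // a aP.
by apply: contraNneq b_out => ->; apply: imset_f.
Qed.

(* If 2|K| < |Q|, some pair (x, y) of colours escapes all the 2|K| guessing
   rules "x = gx k y" and "y = gy k x", k in K: the rules catch at most
   2|K||Q| < |Q|^2 pairs. *)
Lemma avoid_pair (Q I : finType) (K : {set I}) (gx gy : I -> Q -> Q) :
  2 * #|K| < #|Q| ->
  exists p : Q * Q, forall k, k \in K -> (p.1 != gx k p.2) && (p.2 != gy k p.1).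
Proof.
move=> small.
pose catch (kbz : I * bool * Q) : Q * Q :=
  let: (k, b, z) := kbz in if b then (gx k z, z) else (z, gy k z).
have [|p _ p_out] := @avoid_values _ _ [set: Q * Q] (setX (setX K setT) setT) catch.
  by rewrite !cardsX !cardsT card_bool card_prod; nia.
exists p => k kK; have inP (b : bool) (z : Q) : (k, b, z) \in setX (setX K setT) setT.
  by rewrite !inE kK.
apply/andP; split.
  by apply: contra_neq _ (p_out _ (inP true p.2)) => /= <-; apply: surjective_pairing.
by apply: contra_neq _ (p_out _ (inP false p.1)) => /= <-; apply: surjective_pairing.
Qed.

Definition paint m (Q : Type) (a b : Q) (col : 'I_m -> Q * Q) : hvert m -> Q :=
  fun w => match w with
  | None => a
  | Some None => b
  | Some (Some (i, false)) => (col i).1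
  | Some (Some (i, true)) => (col i).2
  end.

(* Restrict u to a set A of two
   colours and v to a set B of three.  Each x_i (resp. y_i) then has 6 guessing
   rules, one per (c u, c v), so some colours of (x_i, y_i) defeat all of
   them.  With these fixed, u guesses a function F of c v and v a function G
   of c u: pick b in B outside G(A), then a in A different from F b. *)
Lemma upper_bound m q : hat_win (hedge m) q -> q <= 12.
Proof.
move=> [f [local win]]; rewrite leqNgt; apply/negP => many_colours.
have [A cardA] : exists A : {set 'I_q}, #|A| = 2.
  by apply: subset_of_card; rewrite card_ord; lia.
have [B cardB] : exists B : {set 'I_q}, #|B| = 3.
  by apply: subset_of_card; rewrite card_ord; lia.
pose gx i (ab : 'I_q * 'I_q) z := f (xv i) (paint ab.1 ab.2 (fun=> (z, z))).
pose gy i (ab : 'I_q * 'I_q) z := f (yv i) (paint ab.1 ab.2 (fun=> (z, z))).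
have /fin_all_exists [col defeat] i : exists p : 'I_q * 'I_q, forall ab,
    ab \in setX A B -> (p.1 != gx i ab p.2) && (p.2 != gy i ab p.1).
  by apply: avoid_pair; rewrite cardsX cardA cardB card_ord.
pose c a b := paint a b col.
have guess_x i a b : f (xv i) (c a b) = gx i (a, b) (col i).2.
  by apply: local => -[[[j [|]]|]|] //= /andP [/eqP <-].
have guess_y i a b : f (yv i) (c a b) = gy i (a, b) (col i).1.
  by apply: local => -[[[j [|]]|]|] //= /andP [/eqP <-].
have guess_u a a' b : f None (c a b) = f None (c a' b).
  by apply: local => -[[[j [|]]|]|].
have guess_v a b b' : f (Some None) (c a b) = f (Some None) (c a b').
  by apply: local => -[[[j [|]]|]|].
have [b bB b_safe] : exists2 b, b \in B & forall a, a \in A -> b != f (Some None) (c a a).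
  by apply: avoid_values; rewrite cardA cardB.
have [a aA a_safe] : exists2 a, a \in A & forall b', b' \in [set b] -> a != f None (c b' b').
  by apply: avoid_values; rewrite cards1 cardA.
have abAB : (a, b) \in setX A B by rewrite !inE aA bB.
have [[[[i [|]]|]|] /= correct] := win (c a b).
- by move: (defeat i _ abAB); rewrite -guess_y correct eqxx andbF.
- by move: (defeat i _ abAB); rewrite -guess_x correct eqxx.
- by move: (b_safe a aA); rewrite -(guess_v a b) correct eqxx.
- by move: (a_safe b (set11 b)); rewrite -(guess_u a) correct eqxx.
Qed.

Section Drawing.
Variable m : nat.
Local Notation V := (hvert m).
Local Open Scope R_scope.

Definition xpos (w : 'I_m * bool) : R := INR (2 * w.1 + 1 + w.2).

Lemma xpos_ge1 w : 1 <= xpos w.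
Proof. by rewrite /xpos -INR_1; apply: le_INR; lia. Qed.

Lemma xpos_inj : injective xpos.
Proof.
move=> [i b] [j b'] /INR_eq /= e.
have eb : b = b' by case: b b' e => [] [] /=; lia.
by subst b'; congr pair; apply: val_inj; rewrite /=; lia.
Qed.

Lemma pair_xpos (i : 'I_m) s :
  (1 - s) * xpos (i, false) + s * xpos (i, true) = INR (2 * i + 1)%nat + s.
Proof. by rewrite /xpos /= addn0 !addn1 !S_INR; ring. Qed.

Lemma nat_frac_eq (n n' : nat) s t :
  0 < s < 1 -> in01 t -> INR n + s = INR n' + t -> n = n'.
Proof.
rewrite /in01 => hs ht e.
have lt1 : INR n < INR (n' + 1) by rewrite plus_INR INR_1; lra.
have lt2 : INR n' < INR (n + 1) by rewrite plus_INR INR_1; lra.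
by move: (INR_lt _ _ lt1) (INR_lt _ _ lt2); lia.
Qed.

Lemma nat_frac_neq (n k : nat) s : 0 < s < 1 -> INR n + s <> INR k.
Proof.
move=> hs e; have nk : n = k.
  by apply: (@nat_frac_eq _ _ s 0) => //; [rewrite /in01; lra | rewrite Rplus_0_r].
by subst k; lra.
Qed.

Definition pos (x : V) : R * R :=
  match x with
  | None => (0, 1)
  | Some None => (0, -1)
  | Some (Some w) => (xpos w, 0)
  end.

Lemma pos_inj : injective pos.
Proof.
move=> [[w|]|] [[w'|]|] //= /pair_equal_spec [e1 e2]; try lra.
by rewrite (xpos_inj e1).
Qed.
Definition lin (P Q : R * R) (t : R) : R * R :=
  ((1 - t) * fst P + t * fst Q, (1 - t) * snd P + t * snd Q).

Lemma lin0 P Q : lin P Q 0 = P.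
Proof. by case: P => p1 p2; rewrite /lin /=; f_equal; ring. Qed.

Lemma lin1 P Q : lin P Q 1 = Q.
Proof. by case: Q => q1 q2; rewrite /lin /=; f_equal; ring. Qed.

Lemma lin_rev P Q t : lin Q P t = lin P Q (1 - t).
Proof. by rewrite /lin; f_equal; ring. Qed.

Lemma lin_continuous P Q : arc_continuous (lin P Q).
Proof.
move=> t _ eps eps_gt0.
set A := Rabs (fst Q - fst P); set B := Rabs (snd Q - snd P).
have A_ge0 : 0 <= A by apply: Rabs_pos.
have B_ge0 : 0 <= B by apply: Rabs_pos.
exists (eps / (A + B + 1)); split; first by apply: Rdiv_lt_0_compat; lra.
move=> s _ close.
have scale : eps / (A + B + 1) * (A + B + 1) = eps by field; lra.
have := Rabs_pos (s - t) => dist_ge0.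
rewrite /lin /=; split.
- have -> : (1 - s) * fst P + s * fst Q - ((1 - t) * fst P + t * fst Q) =
     (s - t) * (fst Q - fst P) by ring.
  rewrite Rabs_mult -/A; nra.
- have -> : (1 - s) * snd P + s * snd Q - ((1 - t) * snd P + t * snd Q) =
     (s - t) * (snd Q - snd P) by ring.
  rewrite Rabs_mult -/B; nra.
Qed.

Lemma lin_injective P Q : P <> Q -> arc_injective (lin P Q).
Proof.
case: P Q => [p1 p2] [q1 q2] nPQ s t _ _; rewrite /lin /= => /pair_equal_spec [e1 e2].
have e1' : (s - t) * (q1 - p1) = 0 by lra.
have e2' : (s - t) * (q2 - p2) = 0 by lra.
case: (Req_dec s t) => // nst; exfalso; apply: nPQ.
have d : s - t <> 0 by lra.
have := Rmult_integral _ _ e1'; have := Rmult_integral _ _ e2'.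
by case=> [//|h2] [//|h1]; f_equal; lra.
Qed.

Inductive cedge := EdgeUV | EdgeU of 'I_m * bool | EdgeV of 'I_m * bool | EdgePair of 'I_m.

Definition ends (E : cedge) : V * V :=
  match E with
  | EdgeUV => (None, Some None)
  | EdgeU w => (None, Some (Some w))
  | EdgeV w => (Some None, Some (Some w))
  | EdgePair i => (Some (Some (i, false)), Some (Some (i, true)))
  end.

Lemma hedge_ends x y : hedge m x y -> exists E, ends E = (x, y) \/ ends E = (y, x).
Proof.
case: x y => [[[i b]|]|] [[[j b']|]|] //= => [/andP [/eqP <-]|_|_|_|_|_|_].
- by case: b b' => [] [] // _; exists (EdgePair i); [right | left].
- by exists (EdgeV (i, b)); right.
- by exists (EdgeU (i, b)); right.
- by exists (EdgeV (j, b')); left.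
- by exists EdgeUV; right.
- by exists (EdgeU (j, b')); left.
- by exists EdgeUV; left.
Qed.

Definition seg (E : cedge) : R -> R * R := lin (pos (ends E).1) (pos (ends E).2).

(* Interior points of edges are not vertices: apart from two cases the
   heights already differ. *)
Lemma seg_not_vertex E z s : 0 < s < 1 -> seg E s <> pos z.
Proof.
case: E z => [|w|w|i] [[w'|]|]; rewrite /seg /lin /= => hs /pair_equal_spec [ex ey];
  try lra.
- by have := xpos_ge1 w'; lra.
- by move: ex; rewrite pair_xpos; apply: nat_frac_neq.
Qed.

(* Edges at u
   live strictly above the axis, edges at v strictly below, edges x_i y_i on
   it; within a class, the height resp. the integer part separates them. *)
Lemma seg_disjoint E E' s t : 0 < s < 1 -> in01 t -> seg E s = seg E' t -> E = E'.
Proof.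
case: E E' => [|w|w|i] [|w'|w'|i']; rewrite /seg /lin /in01 /= => hs ht /pair_equal_spec [ex ey] //;
  try lra.
- by have := xpos_ge1 w'; nra.
- by have := xpos_ge1 w'; nra.
- by have := xpos_ge1 (i', false); have := xpos_ge1 (i', true); nra.
- by have := xpos_ge1 w; nra.
- have st : t = s by lra.
  by subst t; congr EdgeU; apply: xpos_inj; apply: (Rmult_eq_reg_l s); [nra | lra].
- by have := xpos_ge1 w; nra.
- have st : t = s by lra.
  by subst t; congr EdgeV; apply: xpos_inj; apply: (Rmult_eq_reg_l s); [nra | lra].
- by have := xpos_ge1 (i, false); have := xpos_ge1 (i, true); nra.
- have t1 : t = 1 by lra.
  by move: ex; rewrite pair_xpos t1 Rmult_0_r Rmult_1_l Rplus_0_l => /(nat_frac_neq hs).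
- have t1 : t = 1 by lra.
  by move: ex; rewrite pair_xpos t1 Rmult_0_r Rmult_1_l Rplus_0_l => /(nat_frac_neq hs).
- move: ex; rewrite !pair_xpos => /(nat_frac_eq hs ht) e.
  by congr EdgePair; apply: val_inj; rewrite /=; lia.
Qed.
Definition orient (b : bool) (s : R) : R := if b then 1 - s else s.

Lemma orient_open b s : 0 < s < 1 -> 0 < orient b s < 1.
Proof. by case: b => /=; lra. Qed.

Lemma orient_closed b s : in01 s -> in01 (orient b s).
Proof. by rewrite /in01; case: b => /=; lra. Qed.

Lemma edge_seg x y : hedge m x y -> exists (E : cedge) (b : bool),
  ends E = (if b then (y, x) else (x, y)) /\
  forall s, lin (pos x) (pos y) s = seg E (orient b s).
Proof.
case/hedge_ends => E [] eE; [exists E, false | exists E, true];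
  by split=> // s; rewrite /seg eE //= lin_rev.
Qed.

Lemma hedge_irreflexive x : hedge m x x = false.
Proof. by case: x => [[[i [|]]|]|] //=; rewrite eqxx. Qed.

Lemma planar_hedge : planar (hedge m).
Proof.
exists pos, (fun x y => lin (pos x) (pos y)); split; first exact: pos_inj.
split.
  move=> x y xy; split; first exact: lin_continuous.
  split.
    apply: lin_injective => /pos_inj exy; subst y.
    by rewrite hedge_irreflexive in xy.
  by rewrite lin0 lin1; do 2!split=> //; move=> t _; rewrite lin_rev.
split.
  move=> x y z s xy hs; have [E [b [_ ->]]] := edge_seg xy.
  exact: seg_not_vertex (orient_open b hs).
move=> x y x' y' s t xy xy' distinct hs ht.
have [E [b [eE ->]]] := edge_seg xy; have [E' [b' [eE' ->]]] := edge_seg xy'.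
move=> /(seg_disjoint (orient_open b hs) (orient_closed b' ht)) eEE'.
apply: distinct; move: eE'; rewrite -eEE' {}eE.
by case: b b' => [] [] [-> ->]; [left | right | right | left].
Qed.
End Drawing.

Theorem theorem1 :
  planar (hedge (66 ^ 144)) /\ HG_is (hedge (66 ^ 144)) 12.
Proof.
split; first exact: planar_hedge.
split; last exact: upper_bound.
by apply: lower_bound; rewrite leq_exp2r.
Qed.
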